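(* Fix integers $L\ge2$, $n$ divisible by $L$, $K\ge1$, and a class $\mathcal H$ of real functions of $s$. With the data, cross-fold risks $R,\widehat R$ and seminorm $\rho_N$ described in the context, suppose $Y\in[-1,1]$ almost surely and $\sup_{h\in\mathcal H}\|h\|_\infty\le1$. Then for every $\epsilon>0$, $\sup_{h_1,h_2\in\mathcal H:\ \rho_N(h_1-h_2)\le\epsilon}\big[(R(h_1)-\widehat R(h_1))-(R(h_2)-\widehat R(h_2))\big]\le2\epsilon.$
   Context: Data: $N=Kn$ independent observations $O_i=(A_i,S_i,Y_i)$, $A_i\in\{1,\dots,K\}$ the cell of unit $i$, each cell containing exactly $n$ units, i.i.d. within cell; fold labels $V_i\in\{1,\dots,L\}$ assigned independently of $(S,Y)$ with exactly $n/L$ units of each cell in each fold. Let $\tilde y(s,a,y)=y$. For $h$ a function of $s$ (or $\tilde y$, replacing $h(S_i)$ by $Y_i$): $[\Pi h](a)=E[h(S)\mid A=a]$, $[\widehat\Pi^v h](a)=(n/L)^{-1}\sum_i h(S_i)\mathbf 1\{A_i=a,V_i=v\}$, $[\widehat\Pi^{-v}h](a)=(n(L-1)/L)^{-1}\sum_i h(S_i)\mathbf 1\{A_i=a,V_i\neq v\}$. Population cross-fold risk $R(h)=-\frac1K\sum_{a}[\Pi\tilde y](a)[\Pi h](a)+\frac1{2K}\sum_a([\Pi h](a))^2$ (equivalently $-E[E[Y\mid A,V=\widetilde V]E[h(S)\mid A,V\ne\widetilde V]]+\frac12E[E[h(S)\mid A,V=\widetilde V]E[h(S)\mid A,V\ne\widetilde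 V]]$ with $\widetilde V$ an independent copy of the fold label); empirical cross-fold risk $\widehat R(h)=\frac1L\sum_{v=1}^L\frac1K\sum_{a=1}^K\big(-[\widehat\Pi^v\tilde y](a)[\widehat\Pi^{-v}h](a)+\frac12[\widehat\Pi^vh](a)[\widehat\Pi^{-v}h](a)\big)$. Norms: $\|f\|_{1,N}=\frac1N\sum_i|f(O_i)|$, $\|u\|_{1,K}=\frac1K\sum_a|u(a)|$, $\rho_N(f)=\|\Pi f\|_{1,K}+\|f\|_{1,N}$. *)

From HB Require Import structures.
From mathcomp Require Import all_boot all_order all_algebra.
From mathcomp Require Import all_classical all_reals all_analysis.
Set Implicit Arguments. Unset Strict Implicit. Unset Printing Implicit Defensive.
Import Order.TTheory GRing.Theory Num.Theory.
Local Open Scope ring_scope.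

(* Population conditional mean in cell a: the law of a generic observation of
   cell a is the probability [P a] on the sample space [Om]; the coordinates
   S and Y are the functions [Sv] and [Yv] on [Om].  [[Pi f](a) = E_{P a}[f]]. *)
Definition popPi d (Om : measurableType d) (R : realType) (K : nat)
  (P : 'I_K -> probability Om R) (f : Om -> R) (a : 'I_K) : R :=
  fine (\int[P a]_w (f w)%:E)%E.

Definition popRisk d (Om : measurableType d) (R : realType) (K : nat)
  (P : 'I_K -> probability Om R) (Ssp : Type) (Sv : Om -> Ssp) (Yv : Om -> R)
  (h : Ssp -> R) : R :=
  - (K%:R)^-1 * \sum_(a < K) popPi P Yv a * popPi P (h \o Sv) a
  + (2 * K%:R)^-1 * \sum_(a < K) (popPi P (h \o Sv) a) ^+ 2.

Definition empPi_in (R : realType) (N K L n : nat) (A : 'I_N -> 'I_K)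
  (V : 'I_N -> 'I_L) (f : 'I_N -> R) (v : 'I_L) (a : 'I_K) : R :=
  (n%:R / L%:R)^-1 * \sum_(i < N | (A i == a) && (V i == v)) f i.

Definition empPi_out (R : realType) (N K L n : nat) (A : 'I_N -> 'I_K)
  (V : 'I_N -> 'I_L) (f : 'I_N -> R) (v : 'I_L) (a : 'I_K) : R :=
  (n%:R * (L%:R - 1) / L%:R)^-1 * \sum_(i < N | (A i == a) && (V i != v)) f i.

Definition empRisk (R : realType) (N K L n : nat) (A : 'I_N -> 'I_K)
  (V : 'I_N -> 'I_L) (Ssp : Type) (S : 'I_N -> Ssp) (Y : 'I_N -> R)
  (h : Ssp -> R) : R :=
  (L%:R)^-1 * \sum_(v < L) ((K%:R)^-1 * \sum_(a < K)
     (- empPi_in n A V Y v a * empPi_out n A V (fun i => h (S i)) v a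
      + 2^-1 * empPi_in n A V (fun i => h (S i)) v a
             * empPi_out n A V (fun i => h (S i)) v a)).

Definition norm1N (R : realType) (N : nat) (f : 'I_N -> R) : R :=
  (N%:R)^-1 * \sum_(i < N) `|f i|.
Definition norm1K (R : realType) (K : nat) (u : 'I_K -> R) : R :=
  (K%:R)^-1 * \sum_(a < K) `|u a|.

Definition rhoN d (Om : measurableType d) (R : realType) (N K : nat)
  (P : 'I_K -> probability Om R) (Ssp : Type) (Sv : Om -> Ssp)
  (S : 'I_N -> Ssp) (f : Ssp -> R) : R :=
  norm1K (popPi P (f \o Sv)) + norm1N (fun i => f (S i)).

From HB Require Import structures.
From mathcomp Require Import all_boot all_order all_algebra.
From mathcomp Require Import all_classical all_reals all_analysis.
From mathcomp Require Import ring lra measurable_realfun.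
Set Implicit Arguments. Unset Strict Implicit. Unset Printing Implicit Defensive.
Import Order.TTheory GRing.Theory Num.Theory.
Local Open Scope ring_scope.

(* Both risks average the loss [- y * o + i * o / 2] over cells (and folds),
   where [i] and [o] are an in-fold and an out-of-fold mean of [h].  On
   [[-1, 1]] this loss changes by at most [3/2 |do| + 1/2 |di|].  In the
   population risk [i = o = Pi h], so [|R h1 - R h2| <= 2 ||Pi (h1 - h2)||_{1,K}].
   In the empirical risk each unit enters one in-fold mean, with weight
   [L / n], and [L - 1] out-of-fold means, with weight [L / (n (L - 1))];
   so after averaging over the [L] folds and [K] cells, [|di|] and [|do|]
   are each at most [||h1 - h2||_{1,N}].  Summing gives [2 rho_N (h1 - h2)]. *)

Lemma crossfit_loss_lipschitz (R : realFieldType) (y i1 o1 i2 o2 : R) :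
  `|y| <= 1 -> `|o1| <= 1 -> `|i2| <= 1 ->
  `|(- y * o1 + 2^-1 * i1 * o1) - (- y * o2 + 2^-1 * i2 * o2)|
    <= 3 / 2 * `|o1 - o2| + 2^-1 * `|i1 - i2|.
Proof.
move=> hy ho1 hi2.
have -> : (- y * o1 + 2^-1 * i1 * o1) - (- y * o2 + 2^-1 * i2 * o2)
  = (o1 - o2) * (- y + 2^-1 * i2) + (2^-1 * o1) * (i1 - i2) by ring.
have half_ge0 : (0 : R) <= 2^-1 by rewrite invr_ge0.
apply: le_trans (ler_normD _ _) _; rewrite !normrM (ger0_norm half_ge0).
apply: lerD.
  rewrite [leRHS]mulrC ler_wpM2l //.
  apply: le_trans (ler_normD _ _) _.
  by rewrite normrN normrM (ger0_norm half_ge0); lra.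
by rewrite ler_wpM2r // -[leRHS]mulr1 ler_wpM2l.
Qed.

Lemma norm_mean_le1 (R : realFieldType) (I : finType) (P : pred I) (f : I -> R) :
  (forall i, `|f i| <= 1) ->
  `|(\sum_(i | P i) 1)^-1 * \sum_(i | P i) f i| <= 1.
Proof.
move=> hf; set c := \sum_(i | P i) (1 : R).
have c_ge0 : 0 <= c by rewrite sumr_ge0.
rewrite normrM ger0_norm ?invr_ge0 //.
have [->|c_neq0] := eqVneq c 0; first by rewrite invr0 mul0r.
rewrite -(mulVf c_neq0) ler_wpM2l ?invr_ge0 //.
by apply: le_trans (ler_norm_sum _ _ _) _; apply: ler_sum.
Qed.

Lemma norm_scaled_sum_le (R : realDomainType) (I : finType) (P : pred I)
    (c : R) (f : I -> R) :
  0 <= c -> `|c * \sum_(i | P i) f i| <= c * \sum_(i | P i) `|f i|.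
Proof.
by move=> c_ge0; rewrite normrM ger0_norm // ler_wpM2l // ler_norm_sum.
Qed.

Definition fold_cell_mean (R : realFieldType) (K L : nat) (u : 'I_L -> 'I_K -> R) : R :=
  (L%:R)^-1 * \sum_(v < L) ((K%:R)^-1 * \sum_(a < K) u v a).

Section FoldCellMean.
Variables (R : realFieldType) (K L : nat).
Implicit Types u w : 'I_L -> 'I_K -> R.

Lemma fold_cell_meanE u :
  fold_cell_mean u = (L%:R * K%:R)^-1 * \sum_(v < L) \sum_(a < K) u v a.
Proof. by rewrite /fold_cell_mean invfM -mulrA; congr (_ * _); rewrite mulr_sumr. Qed.

Lemma fold_cell_meanD u w :
  fold_cell_mean (fun v a => u v a + w v a) = fold_cell_mean u + fold_cell_mean w.
Proof.
rewrite !fold_cell_meanE -mulrDr; congr (_ * _).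
by under eq_bigr do rewrite big_split; rewrite big_split.
Qed.

Lemma fold_cell_meanB u w :
  fold_cell_mean (fun v a => u v a - w v a) = fold_cell_mean u - fold_cell_mean w.
Proof.
rewrite !fold_cell_meanE -mulrBr; congr (_ * _).
by under eq_bigr do rewrite sumrB; rewrite sumrB.
Qed.

Lemma fold_cell_meanZ c u :
  fold_cell_mean (fun v a => c * u v a) = c * fold_cell_mean u.
Proof.
rewrite !fold_cell_meanE mulrCA; congr (_ * _).
by rewrite mulr_sumr; apply: eq_bigr => v _; rewrite mulr_sumr.
Qed.

Lemma ler_fold_cell_mean u w :
  (forall v a, u v a <= w v a) -> fold_cell_mean u <= fold_cell_mean w.
Proof.
move=> uw; rewrite !fold_cell_meanE ler_wpM2l ?invr_ge0 ?mulr_ge0 //.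
by apply: ler_sum => v _; apply: ler_sum.
Qed.

Lemma ler_norm_fold_cell_mean u :
  `|fold_cell_mean u| <= fold_cell_mean (fun v a => `|u v a|).
Proof.
rewrite !fold_cell_meanE normrM ger0_norm ?invr_ge0 ?mulr_ge0 //.
rewrite ler_wpM2l ?invr_ge0 ?mulr_ge0 //.
apply: le_trans (ler_norm_sum _ _ _) _; apply: ler_sum => v _.
exact: ler_norm_sum.
Qed.

End FoldCellMean.

Section Empirical.
Variables (R : realType) (K L n : nat).
Variables (A : 'I_(K * n) -> 'I_K) (V : 'I_(K * n) -> 'I_L).
Hypotheses (hK : (0 < K)%N) (hL : (2 <= L)%N) (hLn : (L %| n)%N).
Hypothesis hA : forall a, #|[set i | A i == a]| = n.
Hypothesis hAV : forall a v, #|[set i | (A i == a) && (V i == v)]| = (n %/ L)%N.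
Implicit Types (f g : 'I_(K * n) -> R) (a : 'I_K) (v : 'I_L).

Let L_neq0 : (L%:R : R) != 0.
Proof. by rewrite pnatr_eq0 -lt0n (leq_trans _ hL). Qed.

Let K_neq0 : (K%:R : R) != 0.
Proof. by rewrite pnatr_eq0 -lt0n. Qed.

Let Lm1_gt0 : (0 : R) < L%:R - 1.
Proof. by rewrite subr_gt0 ltr1n. Qed.

Lemma count_cell_in_fold a v :
  \sum_(i | (A i == a) && (V i == v)) (1 : R) = n%:R / L%:R.
Proof. by rewrite sumr_const -natf_div // -(hAV a v) cardsE. Qed.

Lemma count_cell_out_fold a v :
  \sum_(i | (A i == a) && (V i != v)) (1 : R) = n%:R * (L%:R - 1) / L%:R.
Proof.
have : \sum_(i | A i == a) (1 : R) = n%:R.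
  (* rewriting [<- (hA a)] would also hit [n] in the index type ['I_(K * n)] *)
  by rewrite sumr_const; move: (hA a); rewrite cardsE => ->.
rewrite (bigID (fun i => V i == v)) /= count_cell_in_fold => cell_count.
apply: (@addrI _ (n%:R / L%:R)); rewrite cell_count.
by field.
Qed.

Lemma empPi_in_mean f v a :
  empPi_in n A V f v a
  = (\sum_(i | (A i == a) && (V i == v)) 1)^-1
    * \sum_(i | (A i == a) && (V i == v)) f i.
Proof. by rewrite count_cell_in_fold. Qed.

Lemma empPi_out_mean f v a :
  empPi_out n A V f v a
  = (\sum_(i | (A i == a) && (V i != v)) 1)^-1
    * \sum_(i | (A i == a) && (V i != v)) f i.
Proof. by rewrite count_cell_out_fold. Qed.

Lemma empPi_inB f g v a :
  empPi_in n A V (fun i => f i - g i) v a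
  = empPi_in n A V f v a - empPi_in n A V g v a.
Proof. by rewrite /empPi_in sumrB mulrBr. Qed.

Lemma empPi_outB f g v a :
  empPi_out n A V (fun i => f i - g i) v a
  = empPi_out n A V f v a - empPi_out n A V g v a.
Proof. by rewrite /empPi_out sumrB mulrBr. Qed.

Lemma sum_cells (Q : pred 'I_(K * n)) (F : 'I_(K * n) -> R) :
  \sum_(a < K) \sum_(i | (A i == a) && Q i) F i = \sum_(i | Q i) F i.
Proof.
rewrite [RHS](partition_big A predT) //.
by apply: eq_bigr => a _; apply: eq_bigl => i; rewrite andbC.
Qed.

Lemma sum_folds (F : 'I_(K * n) -> R) :
  \sum_(v < L) \sum_(i | V i == v) F i = \sum_i F i.
Proof. by rewrite [RHS](partition_big V predT). Qed.

Lemma sum_folds_in (F : 'I_(K * n) -> R) :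
  \sum_(v < L) \sum_(a < K) \sum_(i | (A i == a) && (V i == v)) F i
  = \sum_i F i.
Proof.
by under eq_bigr do rewrite sum_cells; rewrite sum_folds.
Qed.

Lemma sum_folds_out (F : 'I_(K * n) -> R) :
  \sum_(v < L) \sum_(a < K) \sum_(i | (A i == a) && (V i != v)) F i
  = (L%:R - 1) * \sum_i F i.
Proof.
under eq_bigr => v _.
  rewrite sum_cells.
  have -> : \sum_(i | V i != v) F i = \sum_i F i - \sum_(i | V i == v) F i.
    by rewrite [\sum_i F i](bigID (fun i => V i == v)) /= addrC addrK.
  over.
by rewrite sumrB sum_folds sumr_const card_ord mulrBl mul1r mulr_natl.
Qed.

Lemma fold_cell_mean_norm_empPi_in f :
  fold_cell_mean (fun v a => `|empPi_in n A V f v a|) <= norm1N f.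
Proof.
have c_ge0 : (0 : R) <= (n%:R / L%:R)^-1 by rewrite invr_ge0 divr_ge0.
apply: le_trans (ler_fold_cell_mean (fun v a => norm_scaled_sum_le _ _ c_ge0)) _.
rewrite fold_cell_meanZ fold_cell_meanE sum_folds_in /norm1N mulrA natrM.
suff -> : (n%:R / L%:R)^-1 / (L%:R * K%:R) = (K%:R * n%:R)^-1 :> R by rewrite lexx.
have [->|n_neq0] := eqVneq (n%:R : R) 0; first by rewrite !(mul0r, mulr0, invr0).
by field; rewrite K_neq0 L_neq0 n_neq0.
Qed.

Lemma fold_cell_mean_norm_empPi_out f :
  fold_cell_mean (fun v a => `|empPi_out n A V f v a|) <= norm1N f.
Proof.
have c_ge0 : (0 : R) <= (n%:R * (L%:R - 1) / L%:R)^-1.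
  by rewrite invr_ge0 divr_ge0 // mulr_ge0 // ltW.
apply: le_trans (ler_fold_cell_mean (fun v a => norm_scaled_sum_le _ _ c_ge0)) _.
rewrite fold_cell_meanZ fold_cell_meanE sum_folds_out /norm1N !mulrA natrM.
suff -> : (n%:R * (L%:R - 1) / L%:R)^-1 / (L%:R * K%:R) * (L%:R - 1)
          = (K%:R * n%:R)^-1 :> R by rewrite lexx.
have [->|n_neq0] := eqVneq (n%:R : R) 0; first by rewrite !(mul0r, mulr0, invr0).
by field; rewrite K_neq0 L_neq0 n_neq0 gt_eqF.
Qed.

Lemma empRiskE (Ssp : Type) (S : 'I_(K * n) -> Ssp) (Y : 'I_(K * n) -> R)
    (h : Ssp -> R) :
  empRisk n A V S Y h = fold_cell_mean (fun v a =>
    - empPi_in n A V Y v a * empPi_out n A V (h \o S) v a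
    + 2^-1 * empPi_in n A V (h \o S) v a * empPi_out n A V (h \o S) v a).
Proof. by []. Qed.

Lemma empRisk_lipschitz (Ssp : Type) (S : 'I_(K * n) -> Ssp) (Y : 'I_(K * n) -> R)
    (h1 h2 : Ssp -> R) :
  (forall i, `|Y i| <= 1) -> (forall s, `|h1 s| <= 1) -> (forall s, `|h2 s| <= 1) ->
  `|empRisk n A V S Y h1 - empRisk n A V S Y h2|
    <= 2 * norm1N (fun i => h1 (S i) - h2 (S i)).
Proof.
move=> hY hh1 hh2; set g := fun i => h1 (S i) - h2 (S i).
have loss_le v a :
  `|(- empPi_in n A V Y v a * empPi_out n A V (h1 \o S) v a
     + 2^-1 * empPi_in n A V (h1 \o S) v a * empPi_out n A V (h1 \o S) v a)
    - (- empPi_in n A V Y v a * empPi_out n A V (h2 \o S) v a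
     + 2^-1 * empPi_in n A V (h2 \o S) v a * empPi_out n A V (h2 \o S) v a)|
  <= 3 / 2 * `|empPi_out n A V g v a| + 2^-1 * `|empPi_in n A V g v a|.
  rewrite empPi_outB empPi_inB; apply: crossfit_loss_lipschitz.
  - by rewrite empPi_in_mean norm_mean_le1.
  - by rewrite empPi_out_mean norm_mean_le1 // => i; apply: hh1.
  - by rewrite empPi_in_mean norm_mean_le1 // => i; apply: hh2.
rewrite !empRiskE -fold_cell_meanB.
apply: le_trans (ler_norm_fold_cell_mean _) _.
apply: le_trans (ler_fold_cell_mean loss_le) _.
rewrite fold_cell_meanD !fold_cell_meanZ.
have := fold_cell_mean_norm_empPi_in g; have := fold_cell_mean_norm_empPi_out g.
lra.
Qed.

End Empirical.

Section Population.
Variables (d : measure_display) (Om : measurableType d) (R : realType) (K : nat).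
Variable P : 'I_K -> probability Om R.
Implicit Types (f g : Om -> R) (a : 'I_K).

Lemma norm_popPi_le1 f a : measurable_fun setT f ->
  {ae P a, forall w, `|f w| <= 1} -> `|popPi P f a| <= 1.
Proof.
move=> mf hf.
have mEf : measurable_fun setT (fun w => (f w)%:E : \bar R).
  exact/measurable_EFinP.
have : (`|\int[P a]_w (f w)%:E| <= 1)%E.
  apply: le_trans (le_abse_integral _ _ mEf) _ => //.
  apply: le_trans (ae_ge0_le_integral (f2 := fun _ => 1%E) _ _ _ _ _ _) _ => //.
  - exact: measurableT_comp mEf.
  - by apply: filterS hf => w hw _ /=; rewrite lee_fin.
  - by rewrite integral_cst // mul1e probability_le1.
by rewrite /popPi; case: (\int[P a]_w _)%E.
Qed.

Lemma bounded_integrable (mu : {finite_measure set Om -> \bar R}) f (M : R) :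
  measurable_fun setT f -> (forall w, `|f w| <= M) ->
  mu.-integrable setT (EFin \o f).
Proof.
move=> mf hf.
apply: (le_integrable _ _ _ (finite_measure_integrable_cst mu M _)) => //.
  exact/measurable_EFinP.
by move=> w _ /=; rewrite lee_fin (le_trans (hf w)) // ler_norm.
Qed.

Lemma popPiB f g a :
  measurable_fun setT f -> measurable_fun setT g ->
  (forall w, `|f w| <= 1) -> (forall w, `|g w| <= 1) ->
  popPi P (fun w => f w - g w) a = popPi P f a - popPi P g a.
Proof.
move=> mf mg hf hg.
by apply: RintegralB => //; [exact: bounded_integrable mf hf | exact: bounded_integrable mg hg].
Qed.

Lemma popRiskE (Ssp : Type) (Sv : Om -> Ssp) (Yv : Om -> R) (h : Ssp -> R) :
  popRisk P Sv Yv h = (K%:R)^-1 * \sum_(a < K)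
    (- popPi P Yv a * popPi P (h \o Sv) a
     + 2^-1 * popPi P (h \o Sv) a * popPi P (h \o Sv) a).
Proof.
rewrite /popRisk big_split /=.
under [X in _ = _ * (X + _)]eq_bigr do rewrite mulNr.
under [X in _ = _ * (_ + X)]eq_bigr do rewrite -mulrA -expr2.
by rewrite sumrN -mulr_sumr invfM; ring.
Qed.

Lemma popRisk_lipschitz (Ssp : Type) (Sv : Om -> Ssp) (Yv : Om -> R)
    (h1 h2 : Ssp -> R) :
  measurable_fun setT Yv -> (forall a, {ae P a, forall w, `|Yv w| <= 1}) ->
  measurable_fun setT (h1 \o Sv) -> measurable_fun setT (h2 \o Sv) ->
  (forall s, `|h1 s| <= 1) -> (forall s, `|h2 s| <= 1) ->
  `|popRisk P Sv Yv h1 - popRisk P Sv Yv h2|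
    <= 2 * norm1K (popPi P ((fun s => h1 s - h2 s) \o Sv)).
Proof.
move=> mYv hYv mh1 mh2 hh1 hh2.
have popPi_le1 (h : Ssp -> R) a : measurable_fun setT (h \o Sv) ->
    (forall s, `|h s| <= 1) -> `|popPi P (h \o Sv) a| <= 1.
  by move=> mh hh; apply: norm_popPi_le1 => //; apply: aeW => w; apply: hh.
rewrite !popRiskE -mulrBr -sumrB /norm1K normrM ger0_norm ?invr_ge0 //.
rewrite mulrCA ler_wpM2l ?invr_ge0 // mulr_sumr.
apply: le_trans (ler_norm_sum _ _ _) _; apply: ler_sum => a _.
have -> : popPi P ((fun s => h1 s - h2 s) \o Sv) a
          = popPi P (h1 \o Sv) a - popPi P (h2 \o Sv) a.
  exact: popPiB.
apply: le_trans (crossfit_loss_lipschitz _ _ _ _ _) _.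
- exact: norm_popPi_le1.
- exact: popPi_le1.
- exact: popPi_le1.
- lra.
Qed.

End Population.

Theorem lemma4 (R : realType) (L n K : nat) (hL : (2 <= L)%N) (hLn : (L %| n)%N)
  (hK : (1 <= K)%N)
  (* population: law of a generic observation of each cell *)
  (dO : measure_display) (Om : measurableType dO)
  (dS : measure_display) (Ssp : measurableType dS)
  (P : 'I_K -> probability Om R) (Sv : Om -> Ssp) (Yv : Om -> R)
  (mSv : measurable_fun setT Sv) (mYv : measurable_fun setT Yv)
  (hYpop : forall a : 'I_K, {ae P a, forall w, -1 <= Yv w <= 1})
  (* realized data O_i = (A_i, S_i, Y_i) and fold labels V_i, i < N = K n *)
  (A : 'I_(K * n) -> 'I_K) (V : 'I_(K * n) -> 'I_L)
  (S : 'I_(K * n) -> Ssp) (Y : 'I_(K * n) -> R)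
  (hA : forall a : 'I_K, #|[set i | A i == a]| = n)
  (hAV : forall (a : 'I_K) (v : 'I_L), #|[set i | (A i == a) && (V i == v)]| = (n %/ L)%N)
  (hY : forall i, -1 <= Y i <= 1)
  (* the class H *)
  (H : set (Ssp -> R))
  (hHm : forall h, H h -> measurable_fun setT h)
  (hHb : forall h, H h -> forall s, `|h s| <= 1)
  (eps : R) (heps : 0 < eps) :
  forall h1 h2, H h1 -> H h2 ->
    rhoN P Sv S (fun s => h1 s - h2 s) <= eps ->
    (popRisk P Sv Yv h1 - empRisk n A V S Y h1)
      - (popRisk P Sv Yv h2 - empRisk n A V S Y h2) <= 2 * eps.
Proof.
move=> h1 h2 H1 H2 rho_le.
have mhSv h : H h -> measurable_fun setT (h \o Sv).
  by move=> Hh; exact: measurableT_comp (hHm _ Hh) mSv.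
have hYv a : {ae P a, forall w, `|Yv w| <= 1}.
  by apply: filterS (hYpop a) => w; rewrite ler_norml.
have hY' i : `|Y i| <= 1 by rewrite ler_norml.
have := popRisk_lipschitz mYv hYv (mhSv _ H1) (mhSv _ H2) (hHb _ H1) (hHb _ H2).
have := empRisk_lipschitz hK hL hLn hA hAV S hY' (hHb _ H1) (hHb _ H2).
move: rho_le; rewrite /rhoN !ler_norml => ? /andP[? ?] /andP[? ?].
lra.
Qed.
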